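(* For all integers $m,n\geq 1$, \[p^{od}_{ed}(m,2n)-p^{od}_{ed}(m,2n-1)=D_o(m,2n).\]
   Context: $\mathcal{P}^{od}_{ed}$ is the set of integer partitions whose parts are all distinct and such that every even part is smaller than every odd part. Partitions consisting only of odd parts, or only of even parts, are allowed. $p^{od}_{ed}(m,n)$ is the number of partitions of $n$ in $\mathcal{P}^{od}_{ed}$ with exactly $m$ parts. $D_o(m,n)$ is the number of partitions of $n$ into exactly $m$ distinct odd parts. *)

From mathcomp Require Import all_boot.
Set Implicit Arguments. Unset Strict Implicit. Unset Printing Implicit Defensive.

(* A partition of n into distinct parts is encoded as its set of parts,
   a subset A of {0,...,n} (parts are at most n) not containing 0, with
   sum of elements equal to n. *)
Definition distinct_partition (n : nat) (A : {set 'I_n.+1}) : bool :=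
  (ord0 \notin A) && (\sum_(i in A) (i : nat) == n).

Definition evens_below_odds (n : nat) (A : {set 'I_n.+1}) : bool :=
  [forall i in A, forall j in A, (odd i && ~~ odd j) ==> (j < i)].

Definition p_od_ed (m n : nat) : nat :=
  #|[set A : {set 'I_n.+1} | [&& distinct_partition A, evens_below_odds A
                                 & #|A| == m]]|.

Definition D_o (m n : nat) : nat :=
  #|[set A : {set 'I_n.+1} | [&& distinct_partition A,
                                 [forall i in A, odd i] & #|A| == m]]|.

From mathcomp Require Import all_boot all_algebra zify.
Set Implicit Arguments. Unset Strict Implicit. Unset Printing Implicit Defensive.

(* A partition of an odd number K into distinct parts must have
   an odd part.  Among the partitions of K in P^{od}_{ed} with m parts,
   adding 1 to the smallest odd part x0 gives a partition of K+1 with m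
   parts that is again in P^{od}_{ed} (x0+1 lies strictly between the even
   and the remaining odd parts) and now has an even part, namely its largest
   one.  Conversely, subtracting 1 from the largest even part of a partition
   of K+1 in P^{od}_{ed} with an even part inverts this map.  Hence, for K
   odd, p^{od}_{ed}(m,K) counts the partitions of K+1 in P^{od}_{ed} with m
   parts and at least one even part; the remaining ones have only odd parts
   and are counted by D_o(m,K+1).  With K = 2n-1 this is the theorem. *)

Lemma evens_below_oddsP n (A : {set 'I_n.+1}) :
  reflect (forall i j, i \in A -> j \in A -> odd i -> ~~ odd j -> j < i)
          (evens_below_odds A).
Proof.
apply: (iffP forall_inP) => [H i j iA jA oi ej | H i iA].
  by move/forall_inP: (H i iA) => /(_ j jA); rewrite oi ej.
by apply/forall_inP => j jA; apply/implyP => /andP[oi ej]; apply: H.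
Qed.

Lemma part_gt0 n (A : {set 'I_n.+1}) x : ord0 \notin A -> x \in A -> 0 < x.
Proof.
move=> A0 xA; rewrite lt0n; apply: contraNneq A0 => x_eq0.
by rewrite (_ : ord0 = x) //; apply: val_inj.
Qed.

Lemma add_parts_le_sum N (B : {set 'I_N}) (a b : 'I_N) :
  a \in B -> b \in B -> a != b -> a + b <= \sum_(i in B) i.
Proof.
move=> aB bB ab; rewrite (bigD1 a) //= (bigD1 b) /=; last by rewrite bB eq_sym ab.
by rewrite addnA leq_addr.
Qed.

Lemma sum_eq_indicator (T : finType) (A : {set T}) (a : T) :
  a \in A -> \sum_(x in A) (x == a) = 1.
Proof. by move=> aA; rewrite (bigD1 a) //= eqxx big1 // => x /andP[_ /negbTE ->]. Qed.

Lemma odd_sum_has_odd_part N (A : {set 'I_N}) :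
  odd (\sum_(i in A) i) -> [exists i in A, odd i].
Proof.
apply: contraTT => /exists_inP noodd; rewrite -dvdn2; apply: dvdn_sum => i iA.
by rewrite dvdn2; apply/negP => oi; apply: noodd; exists i.
Qed.

Definition min_odd K (A : {set 'I_K.+1}) (x : nat) : bool :=
  odd x && [forall y in A, odd y ==> (x <= y)].
Definition raise K (A : {set 'I_K.+1}) (x : 'I_K.+1) : 'I_K.+2 :=
  inord (x + min_odd A x).
Definition raise_set K (A : {set 'I_K.+1}) : {set 'I_K.+2} := raise A @: A.

Definition max_even K (B : {set 'I_K.+2}) (y : nat) : bool :=
  ~~ odd y && [forall z in B, ~~ odd z ==> (z <= y)].
Definition lower K (B : {set 'I_K.+2}) (y : 'I_K.+2) : 'I_K.+1 :=
  inord (y - max_even B y).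
Definition lower_set K (B : {set 'I_K.+2}) : {set 'I_K.+1} := lower B @: B.

Definition with_odd_part K m := [set A : {set 'I_K.+1} | [&& distinct_partition A,
   evens_below_odds A, #|A| == m & [exists i in A, odd i]]].
Definition with_even_part K m := [set B : {set 'I_K.+2} | [&& distinct_partition B,
   evens_below_odds B, #|B| == m & [exists i in B, ~~ odd i]]].

Section Raise.

Variables (K : nat) (A : {set 'I_K.+1}) (x0 : 'I_K.+1).
Hypothesis Aeb : evens_below_odds A.
Hypotheses (x0A : x0 \in A) (odd_x0 : odd x0).
Hypothesis x0_min : forall y, y \in A -> odd y -> x0 <= y.

Lemma min_oddE x : x \in A -> min_odd A x = (x == x0).
Proof.
move=> xA; apply/andP/eqP => [[ox /forall_inP xmin] | ->].
  by apply: val_inj; apply/eqP; rewrite eqn_leq x0_min // (implyP (xmin _ x0A)).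
by split=> //; apply/forall_inP => y yA; apply/implyP; apply: x0_min.
Qed.

Lemma raise_val x : x \in A -> raise A x = x + (x == x0) :> nat.
Proof.
move=> xA; rewrite /raise min_oddE // inordK //.
by have := ltn_ord x; case: eqP => _ /=; lia.
Qed.

Lemma even_lt_min_odd x : x \in A -> ~~ odd x -> x < x0.
Proof. by move=> xA ex; apply: (elimT (evens_below_oddsP A) Aeb). Qed.

Lemma odd_gt_min_odd x : x \in A -> odd x -> x != x0 -> x0.+1 < x.
Proof.
move=> xA ox nx; have le := x0_min xA ox.
have nx' : x != x0 :> nat by [].
have ns : x != x0.+1 :> nat by apply: contraTneq ox => ->; rewrite /= odd_x0.
lia.
Qed.

Lemma raise_inj : {in A &, injective (raise A)}.
Proof.
have other x : x \in A -> x != x0 -> (x < x0) || (x0.+1 < x).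
  move=> xA nx; case: (boolP (odd x)) => ox.
    by rewrite odd_gt_min_odd ?orbT.
  by rewrite even_lt_min_odd.
move=> x y xA yA /(congr1 (@nat_of_ord _)); rewrite !raise_val //.
case: (eqVneq x x0) => [->|nx]; case: (eqVneq y x0) => [->|ny] //=.
- by move: (other y yA ny) => ? ?; lia.
- by move: (other x xA nx) => ? ?; lia.
- by rewrite !addn0 => /val_inj.
Qed.

Lemma max_even_raise x : x \in A -> max_even (raise_set A) (raise A x) = (x == x0).
Proof.
have x01 : raise A x0 = x0.+1 :> nat by rewrite raise_val // eqxx addn1.
move=> xA; case: eqVneq => [-> | nx].
  apply/andP; split; first by rewrite x01 /= odd_x0.
  apply/forall_inP => _ /imsetP[y yA ->]; apply/implyP.
  rewrite raise_val //; case: eqVneq => [-> | ny]; first by rewrite x01 addn1.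
  by rewrite /= addn0 => ey; have := even_lt_min_odd yA ey; rewrite x01; lia.
apply/negbTE/andP => -[ex /forall_inP xmax]; rewrite raise_val // (negbTE nx) /= addn0 in ex xmax.
have := implyP (xmax _ (imset_f (raise A) x0A)); rewrite x01 /= odd_x0 => /(_ isT).
by have := even_lt_min_odd xA ex; lia.
Qed.

Lemma lower_raise : lower_set (raise_set A) = A.
Proof.
rewrite /lower_set /raise_set -imset_comp -[RHS]imset_id.
apply: eq_in_imset => x xA /=; apply: val_inj => /=.
by rewrite /lower max_even_raise // raise_val // addnK inordK.
Qed.

Lemma raise_set_sum : \sum_(i in raise_set A) i = (\sum_(i in A) i).+1.
Proof.
rewrite big_imset /=; last exact: raise_inj.
under eq_bigr => i iA do rewrite raise_val //.
by rewrite big_split /= sum_eq_indicator // addn1.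
Qed.

Lemma raise_set_no0 : ord0 \notin A -> ord0 \notin raise_set A.
Proof.
move=> A0; apply/imsetP => -[x xA /(congr1 (@nat_of_ord _))]; rewrite raise_val //=.
by have := part_gt0 A0 xA; lia.
Qed.

Lemma raise_set_evens_below_odds : evens_below_odds (raise_set A).
Proof.
apply/evens_below_oddsP => _ _ /imsetP[x1 x1A ->] /imsetP[x2 x2A ->].
rewrite !raise_val //; case: eqVneq => [-> | n1]; first by rewrite addn1 /= odd_x0.
rewrite /= addn0 => o1; have := odd_gt_min_odd x1A o1 n1.
case: eqVneq => [-> | n2] /=; first by rewrite addn1.
by rewrite addn0 => gt1 e2; have := even_lt_min_odd x2A e2; lia.
Qed.

Lemma raise_set_has_even : [exists i in raise_set A, ~~ odd i].
Proof.
by apply/exists_inP; exists (raise A x0); rewrite ?imset_f // raise_val // eqxx addn1 /= odd_x0.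
Qed.

Lemma raise_set_with_even_part m :
  distinct_partition A -> #|A| = m -> raise_set A \in with_even_part K m.
Proof.
case/andP=> A0 /eqP Asum Acard.
rewrite inE /distinct_partition raise_set_no0 // raise_set_sum Asum eqxx.
rewrite raise_set_evens_below_odds raise_set_has_even card_in_imset ?Acard ?eqxx //.
exact: raise_inj.
Qed.

End Raise.

Section Lower.

Variables (K : nat) (B : {set 'I_K.+2}) (e0 : 'I_K.+2).
Hypotheses (B0 : ord0 \notin B) (Beb : evens_below_odds B).
Hypothesis Bsum : \sum_(i in B) i = K.+1.
Hypotheses (e0B : e0 \in B) (even_e0 : ~~ odd e0).
Hypothesis e0_max : forall y, y \in B -> ~~ odd y -> y <= e0.

Lemma max_evenE y : y \in B -> max_even B y = (y == e0).
Proof.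
move=> yB; apply/andP/eqP => [[ey /forall_inP ymax] | ->].
  by apply: val_inj; apply/eqP; rewrite eqn_leq e0_max // (implyP (ymax _ e0B)).
by split=> //; apply/forall_inP => z zB; apply/implyP; apply: e0_max.
Qed.

Lemma e0_gt1 : 1 < e0.
Proof. by have := part_gt0 B0 e0B; move: even_e0; case: (nat_of_ord e0) => [|[]]. Qed.

Lemma odd_e0_pred : odd e0.-1.
Proof. by have := e0_gt1; move: even_e0; case: (nat_of_ord e0) => [|k] //= /negPn. Qed.

(* Lowering changes e0 into e0-1 and leaves the other parts unchanged; the
   other parts are at most K because e0 is positive. *)
Lemma lower_val y : y \in B -> lower B y = y - (y == e0) :> nat.
Proof.
move=> yB; rewrite /lower max_evenE // inordK //.
case: eqVneq => [-> | ny]; first by have := ltn_ord e0; lia.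
by have := add_parts_le_sum yB e0B ny; have := e0_gt1; lia.
Qed.

Lemma odd_gt_max_even y : y \in B -> odd y -> e0 < y.
Proof. by move=> yB oy; apply: (elimT (evens_below_oddsP B) Beb). Qed.

Lemma even_lt_max_even y : y \in B -> ~~ odd y -> y != e0 -> y.+1 < e0.
Proof.
move=> yB ey ny; have le := e0_max yB ey.
have ny' : y != e0 :> nat by [].
have ns : y.+1 != e0 by apply: contraTneq even_e0 => <-; rewrite /= ey.
lia.
Qed.

Lemma lower_inj : {in B &, injective (lower B)}.
Proof.
have other y : y \in B -> y != e0 -> (y.+1 < e0) || (e0 < y).
  move=> yB ny; case: (boolP (odd y)) => oy.
    by rewrite odd_gt_max_even ?orbT.
  by rewrite even_lt_max_even.
move=> x y xB yB /(congr1 (@nat_of_ord _)); rewrite !lower_val //; have := e0_gt1.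
case: (eqVneq x e0) => [->|nx]; case: (eqVneq y e0) => [->|ny] //=.
- by move: (other y yB ny) => ? ? ?; lia.
- by move: (other x xB nx) => ? ? ?; lia.
- by rewrite !subn0 => _ /val_inj.
Qed.

Lemma min_odd_lower y : y \in B -> min_odd (lower_set B) (lower B y) = (y == e0).
Proof.
have e01 : lower B e0 = e0.-1 :> nat by rewrite lower_val // eqxx subn1.
move=> yB; case: eqVneq => [-> | ny].
  apply/andP; split; first by rewrite e01 odd_e0_pred.
  apply/forall_inP => _ /imsetP[z zB ->]; apply/implyP.
  rewrite lower_val //; case: eqVneq => [-> | nz]; first by rewrite e01 subn1.
  by rewrite /= subn0 => oz; have := odd_gt_max_even zB oz; rewrite e01; lia.
apply/negbTE/andP => -[oy /forall_inP ymin]; rewrite lower_val // (negbTE ny) /= subn0 in oy ymin.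
have := implyP (ymin _ (imset_f (lower B) e0B)); rewrite e01 odd_e0_pred => /(_ isT).
by have := odd_gt_max_even yB oy; have := e0_gt1; lia.
Qed.

Lemma lower_addK y : y \in B -> lower B y + (y == e0) = y.
Proof. by move=> yB; rewrite lower_val //; case: eqVneq => [-> | _] /=; have := e0_gt1; lia. Qed.

Lemma raise_lower : raise_set (lower_set B) = B.
Proof.
rewrite /lower_set /raise_set -imset_comp -[RHS]imset_id.
apply: eq_in_imset => y yB /=; apply: val_inj => /=.
by rewrite /raise min_odd_lower // lower_addK // inordK.
Qed.

Lemma lower_set_sum : \sum_(i in lower_set B) i = K.
Proof.
have : \sum_(i in B) (lower B i + (i == e0)) = K.+1.
  by rewrite -[RHS]Bsum; apply: eq_bigr => i; apply: lower_addK.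
rewrite big_split /= sum_eq_indicator // addn1 => /succn_inj sumK.
rewrite big_imset /=; [exact: sumK | exact: lower_inj].
Qed.

Lemma lower_set_no0 : ord0 \notin lower_set B.
Proof.
apply/imsetP => -[y yB /(congr1 (@nat_of_ord _))]; rewrite lower_val //=.
have := part_gt0 B0 yB; have := e0_gt1.
by case: eqVneq => [-> | _]; lia.
Qed.

Lemma lower_set_evens_below_odds : evens_below_odds (lower_set B).
Proof.
apply/evens_below_oddsP => _ _ /imsetP[y1 y1B ->] /imsetP[y2 y2B ->].
rewrite !lower_val //; case: (eqVneq y2 e0) => [-> | n2]; first by rewrite subn1 odd_e0_pred.
rewrite /= subn0 => o1 e2; have := even_lt_max_even y2B e2 n2.
case: (eqVneq y1 e0) o1 => [-> | n1] /=; first lia.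
by rewrite subn0 => o1; have := odd_gt_max_even y1B o1; lia.
Qed.

Lemma lower_set_has_odd : [exists i in lower_set B, odd i].
Proof.
apply/exists_inP; exists (lower B e0); first exact: imset_f.
by rewrite lower_val // eqxx subn1 odd_e0_pred.
Qed.

Lemma lower_set_with_odd_part m : #|B| = m -> lower_set B \in with_odd_part K m.
Proof.
move=> Bcard; rewrite inE /distinct_partition lower_set_no0 lower_set_sum eqxx.
rewrite lower_set_evens_below_odds lower_set_has_odd card_in_imset ?Bcard ?eqxx //.
exact: lower_inj.
Qed.

End Lower.

Lemma raise_spec K m A : A \in with_odd_part K m ->
  raise_set A \in with_even_part K m /\ lower_set (raise_set A) = A.
Proof.
rewrite inE => /and4P[dpA Aeb /eqP Acard /exists_inP[i iA oi]].
pose P : pred 'I_K.+1 := fun x => (x \in A) && odd x.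
have Pi : P i by rewrite /P iA.
case: (arg_minnP val Pi) => x0 /andP[x0A ox0] x0min.
have x0_min y : y \in A -> odd y -> x0 <= y by move=> yA oy; apply: x0min; rewrite /P yA.
split; first exact: (raise_set_with_even_part Aeb x0A ox0 x0_min dpA Acard).
exact: (lower_raise Aeb x0A ox0 x0_min).
Qed.

Lemma lower_spec K m B : B \in with_even_part K m ->
  lower_set B \in with_odd_part K m /\ raise_set (lower_set B) = B.
Proof.
rewrite inE => /and4P[/andP[B0 /eqP Bsum] Beb /eqP Bcard /exists_inP[i iB ei]].
pose P : pred 'I_K.+2 := fun y => (y \in B) && ~~ odd y.
have Pi : P i by rewrite /P iB.
case: (arg_maxnP val Pi) => e0 /andP[e0B ee0] e0max.
have e0_max y : y \in B -> ~~ odd y -> y <= e0 by move=> yB ey; apply: e0max; rewrite /P yB.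
split; first exact: (lower_set_with_odd_part B0 Beb Bsum e0B ee0 e0_max Bcard).
exact: (raise_lower B0 Beb Bsum e0B ee0 e0_max).
Qed.

Lemma card_with_odd_part K m : #|with_odd_part K m| = #|with_even_part K m|.
Proof.
have raise_inj_on : {in with_odd_part K m &, injective (@raise_set K)}.
  by move=> A1 A2 /raise_spec[_ e1] /raise_spec[_ e2] e12; rewrite -e1 e12 e2.
rewrite -(card_in_imset raise_inj_on); apply: eq_card => B.
apply/imsetP/idP => [[A /raise_spec[] ? _ ->] // | BT].
by have [? ?] := lower_spec BT; exists (lower_set B).
Qed.

(* For K odd every partition of K has an odd part. *)
Lemma p_od_ed_odd K m : odd K -> p_od_ed m K = #|with_odd_part K m|.
Proof.
move=> oK; apply: eq_card => A; rewrite !inE.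
case dp: (distinct_partition A) => //=.
have -> : [exists i in A, odd i]; last by rewrite andbT.
by case/andP: dp => _ /eqP sumA; rewrite odd_sum_has_odd_part ?sumA.
Qed.

(* A partition of K+1 in P^{od}_{ed} either has only odd parts or has an even
   part; in the first case the condition "evens below odds" is vacuous. *)
Lemma p_od_ed_split K m : p_od_ed m K.+1 = D_o m K.+1 + #|with_even_part K m|.
Proof.
rewrite /p_od_ed -(cardsID [set B : {set 'I_K.+2} | [exists i in B, ~~ odd i]]) addnC.
congr (_ + _); apply: eq_card => A; rewrite !inE; last first.
  by rewrite andbC; case: [exists i in A, ~~ odd i]; rewrite ?andbF ?andbT //= -andbA.
have all_oddE : (~~ [exists i in A, ~~ odd i]) = [forall i in A, odd i].
  by rewrite negb_exists_in; apply: eq_forallb => i; rewrite negbK.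
rewrite all_oddE; case: (boolP [forall i in A, odd i]) => [allodd | _]; last by rewrite !andbF.
suff -> : evens_below_odds A by [].
by apply/evens_below_oddsP => i j _ jA _; rewrite (forall_inP allodd j jA).
Qed.

Local Open Scope ring_scope.

Theorem mainTheorem2 (m n : nat) (hm : (1 <= m)%N) (hn : (1 <= n)%N) :
  (p_od_ed m (2 * n))%:Z - (p_od_ed m (2 * n - 1))%:Z = (D_o m (2 * n))%:Z.
Proof.
have oddK : odd (2 * n - 1).
  by rewrite (_ : 2 * n - 1 = (2 * n.-1).+1)%N /= ?oddM //; lia.
set K := (2 * n - 1)%N in oddK *.
have -> : (2 * n = K.+1)%N by rewrite /K; lia.
rewrite p_od_ed_split (p_od_ed_odd m oddK) card_with_odd_part PoszD.
by rewrite GRing.addrK.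
Qed.
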